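(* Consider a discounted MDP with finite state space $\mathcal{S}$, finite action space $\mathcal{A}$, reward vector $r$, transition matrix $P$ with $P_{sa,\tilde s}=\Pr(\tilde s\mid s,a)$, initial state distribution $\mu_0$ with full support, and discount $\gamma\in[0,1)$. Let $\theta\mapsto\pi_\theta$ be a differentiable parametrized policy with $\pi_\theta(s,a)>0$ for all $(s,a)$, and let the critic be directly parametrized by a vector $q\in\mathbb{R}^{|\mathcal{S}||\mathcal{A}|}$. Define the actor objective $J_\pi(\theta,q)=(1-\gamma)\mu_0^\top\Pi_\theta q$ and the on-policy critic objective $J_q(\theta,q)=\tfrac12(r-\Psi_\theta q)^\top D_\theta(r-\Psi_\theta q)$, where $\Psi_\theta=I-\gamma P\Pi_\theta$ and $D_\theta=\Delta(d_\theta)$. Define the Stackelberg gradient $$g_{S,\theta}=\partial_\theta J_\pi-(\partial_\theta\partial_q J_q)^\top(\partial_q^2 J_q)^{-1}(\partial_q J_\pi).$$ Then for every $q$, $$g_{S,\theta}=\partial_\theta J_\pi+\nabla_\theta\big(d_\theta^\top\delta_\theta\big)=\nabla_\theta J(\theta),$$ where $\delta_\theta=r-\Psi_\theta q$ (with $q$ held fixed) and $J(\theta)=(1-\gamma)\mu_0^\top\Pi_\theta q_\theta$ is the cumulative discounted reward objective.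
   Context: $\pi_\theta\in\mathbb{R}_+^{|\mathcal{S}||\mathcal{A}|}$ has entries $\pi_\theta(s,a)$, normalized in each state. $\Pi_\theta\in\mathbb{R}^{|\mathcal{S}|\times|\mathcal{S}||\mathcal{A}|}$ is block-diagonal with row $s$ containing $\pi_\theta(s,\cdot)^\top$, so $(\Pi_\theta v)(s)=\sum_a\pi_\theta(s,a)v(s,a)$. $q_\theta=\sum_{i\ge0}(\gamma P\Pi_\theta)^i r$. $d_\theta(s,a)=(1-\gamma)\sum_{i\ge0}\gamma^i\Pr(S_i=s,A_i=a)$ is the discounted state-action visitation distribution under $S_0\sim\mu_0$, policy $\pi_\theta$ and transitions $P$; $\Delta(v)$ is the diagonal matrix with diagonal $v$. Note $J_q$ depends on $\theta$ also through $D_\theta$. $\partial_q J_\pi$ and $\partial_q^2J_q$ are the gradient and Hessian in $q$; $\partial_\theta\partial_q J_q$ is the $|\mathcal{S}||\mathcal{A}|\times p$ matrix with entries $\partial^2 J_q/\partial q_{sa}\partial\theta_i$; $\partial_\theta J_\pi$ is the $\theta$-gradient at fixed $q$. *)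

From HB Require Import structures.
From mathcomp Require Import all_boot all_order all_algebra.
From mathcomp Require Import all_classical all_reals all_analysis.
Set Implicit Arguments. Unset Strict Implicit. Unset Printing Implicit Defensive.
Import Order.TTheory GRing.Theory Num.Theory.
Import numFieldNormedType.Exports.
Local Open Scope ring_scope.

(* Vectors in R^{|S||A|} are functions  S * A -> R. *)

Section MDP.
Context {R : realType} {S A : finType} {p : nat}.
Variables (P : S * A -> S -> R) (mu0 : S -> R) (r : S * A -> R) (gamma : R)
          (pi : 'rV[R]_p -> S -> A -> R).

(* entry (sa, s'a') of the matrix P Pi_theta *)
Definition PPi (th : 'rV[R]_p) (x y : S * A) : R := P x y.1 * pi th y.1 y.2.

Definition PPi_mul (th : 'rV[R]_p) (v : S * A -> R) : S * A -> R :=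
  fun x => \sum_(y : S * A) PPi th x y * v y.

Definition PPi_step (th : 'rV[R]_p) (nu : S * A -> R) : S * A -> R :=
  fun y => \sum_(x : S * A) nu x * PPi th x y.

(* Pr(S_i = s, A_i = a) under S_0 ~ mu0, policy pi_theta, transitions P *)
Definition prob_sa (th : 'rV[R]_p) (i : nat) : S * A -> R :=
  iter i (PPi_step th) (fun x => mu0 x.1 * pi th x.1 x.2).

Definition dvis (th : 'rV[R]_p) (x : S * A) : R :=
  (1 - gamma) * limn (fun n : nat => \sum_(0 <= i < n) (gamma ^+ i * prob_sa th i x)).

Definition qpol (th : 'rV[R]_p) (x : S * A) : R :=
  limn (fun n : nat => \sum_(0 <= i < n) (gamma ^+ i * iter i (PPi_mul th) r x)).

Definition Pi_mul (th : 'rV[R]_p) (v : S * A -> R) (s : S) : R :=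
  \sum_(a : A) pi th s a * v (s, a).

Definition Jpi (th : 'rV[R]_p) (q : S * A -> R) : R :=
  (1 - gamma) * \sum_(s : S) mu0 s * Pi_mul th q s.

Definition Jobj (th : 'rV[R]_p) : R := Jpi th (qpol th).

Definition Psi_mul (th : 'rV[R]_p) (q : S * A -> R) (x : S * A) : R :=
  q x - gamma * PPi_mul th q x.

Definition tdelta (th : 'rV[R]_p) (q : S * A -> R) (x : S * A) : R :=
  r x - Psi_mul th q x.

Definition Jq (th : 'rV[R]_p) (q : S * A -> R) : R :=
  2^-1 * \sum_(x : S * A) dvis th x * (tdelta th q x) ^+ 2.

End MDP.

Definition qupd {R : realType} {X : eqType} (q : X -> R) (x : X) (t : R) : X -> R :=
  fun y => q y + (if y == x then t else 0).

Definition dq {R : realType} {X : eqType} (f : (X -> R) -> R) (q : X -> R) (x : X) : R :=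
  derive1 (fun t : R => f (qupd q x t)) 0.

Definition dth {R : realType} {p : nat} (f : 'rV[R]_p -> R) (th : 'rV[R]_p) (i : 'I_p) : R :=
  derive f th (delta_mx 0 i).

Definition finv {R : realType} {X : finType} (H : X -> X -> R) (x y : X) : R :=
  invmx (\matrix_(i < #|X|, j < #|X|) H (enum_val i) (enum_val j))
        (enum_rank x) (enum_rank y).

Section Stackelberg.
Context {R : realType} {S A : finType} {p : nat}.
Variables (P : S * A -> S -> R) (mu0 : S -> R) (r : S * A -> R) (gamma : R)
          (pi : 'rV[R]_p -> S -> A -> R).

Let Jpi' := Jpi mu0 gamma pi.
Let Jq' := Jq P mu0 r gamma pi.

Definition mixedJq (th : 'rV[R]_p) (q : S * A -> R) (x : S * A) (i : 'I_p) : R :=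
  dth (fun th' => dq (Jq' th') q x) th i.

Definition hessJq (th : 'rV[R]_p) (q : S * A -> R) (x y : S * A) : R :=
  dq (fun q' => dq (Jq' th) q' x) q y.

Definition gS (th : 'rV[R]_p) (q : S * A -> R) (i : 'I_p) : R :=
  dth (fun th' => Jpi' th' q) th i
  - \sum_(x : S * A) \sum_(y : S * A)
      mixedJq th q x i * finv (hessJq th q) x y * dq (Jpi' th) q y.

End Stackelberg.

From Pilot Require Import Defs.
From HB Require Import structures.
From mathcomp Require Import all_boot all_order all_algebra.
From mathcomp Require Import all_classical all_reals all_analysis.
From mathcomp Require Import ring.
Import Order.TTheory GRing.Theory Num.Theory.
Import numFieldNormedType.Exports.
Local Open Scope ring_scope.

(* Write Psi = I - gamma P Pi_theta and nu0(s, a) = mu0(s) pi_theta(s, a).  As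
   P Pi_theta is row-stochastic and gamma < 1, Psi is invertible, and the series
   defining d_theta and q_theta give d_theta^T Psi = (1 - gamma) nu0^T and
   Psi q_theta = r.  Hence J_pi(theta, q) = (1 - gamma) nu0^T q = d_theta^T Psi q,
   so J_pi + d_theta^T delta_theta = d_theta^T r = J(theta) for every q.
   On the critic side d_q J_q = - Psi^T D delta, the Hessian is Psi^T D Psi
   (invertible because d_theta > 0) and d_q J_pi = Psi^T d_theta.  Since
   Psi 1 = (1 - gamma) 1, the Hessian maps the constant vector 1 / (1 - gamma) to
   d_q J_pi, so the Stackelberg correction is the theta-derivative of
   1^T Psi^T D delta / (1 - gamma) = d_theta^T delta_theta.  Differentiability of
   d_theta in theta follows from Cramer's rule. *)

Section FinTypeMatrix.
Context {R : fieldType} {X : finType}.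

(* [Defs.finv H x y] is [invmx (fmx H) (enum_rank x) (enum_rank y)]. *)
Definition fmx (B : X -> X -> R) : 'M[R]_#|X| :=
  \matrix_(i, j) B (enum_val i) (enum_val j).

Definition frow (u : X -> R) : 'rV[R]_#|X| := \row_j u (enum_val j).

Lemma fmx_tr (B : X -> X -> R) : (fmx B)^T = fmx (fun x y => B y x).
Proof. by apply/matrixP => i j; rewrite !mxE. Qed.

Lemma frowK (v : 'rV[R]_#|X|) : frow (fun x => v 0 (enum_rank x)) = v.
Proof. by apply/rowP => j; rewrite !mxE enum_valK. Qed.

Lemma mul_frow_fmx (u : X -> R) (B : X -> X -> R) :
  frow u *m fmx B = frow (fun y => \sum_x u x * B x y).
Proof.
apply/rowP => j; rewrite !mxE [RHS]big_enum_val.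
by apply: eq_bigr => k _; rewrite !mxE.
Qed.

Lemma fmx_unit_row (B : X -> X -> R) :
  (forall u, (forall y, \sum_x u x * B x y = 0) -> forall x, u x = 0) ->
  fmx B \in unitmx.
Proof.
move=> B_inj; rewrite -row_free_unit -kermx_eq0; apply/eqP/row_matrixP => k.
rewrite row0 -[row k _]frowK; set u := fun x => _.
have uB : frow u *m fmx B = 0 by rewrite frowK -row_mul mulmx_ker row0.
have u0 : forall x, u x = 0.
  apply: B_inj => y; move/rowP/(_ (enum_rank y)): uB.
  by rewrite mul_frow_fmx !mxE enum_rankK.
by apply/rowP => j; rewrite !mxE u0.
Qed.

Lemma fmx_unit (B : X -> X -> R) :
  (forall u, (forall x, \sum_y B x y * u y = 0) -> forall y, u y = 0) ->
  fmx B \in unitmx.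
Proof.
move=> B_inj; rewrite -unitmx_tr fmx_tr; apply: fmx_unit_row => u uB.
by apply: B_inj => x; rewrite -[RHS](uB x); apply: eq_bigr => y _; rewrite mulrC.
Qed.

Lemma fmx_row_solve {B : X -> X -> R} {u c : X -> R} :
  fmx B \in unitmx -> (forall y, \sum_x u x * B x y = c y) ->
  forall y, u y = \sum_x c x * invmx (fmx B) (enum_rank x) (enum_rank y).
Proof.
move=> B_unit uB y.
have : frow u = frow c *m invmx (fmx B).
  by rewrite -[frow u](mulmxK B_unit) mul_frow_fmx; congr (frow _ *m _); apply/funext.
move/rowP/(_ (enum_rank y)); rewrite !mxE enum_rankK => ->.
by rewrite [RHS]big_enum_val; apply: eq_bigr => j _; rewrite !mxE enum_valK.
Qed.

Lemma fmx_col_solve {B : X -> X -> R} (w : X -> R) {c : X -> R} :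
  fmx B \in unitmx -> (forall x, \sum_y B x y * w y = c x) ->
  forall x, \sum_y invmx (fmx B) (enum_rank x) (enum_rank y) * c y = w x.
Proof.
move=> B_unit Bw x.
have BT_unit : fmx (fun x y => B y x) \in unitmx by rewrite -fmx_tr unitmx_tr.
rewrite (@fmx_row_solve _ w c BT_unit) => [|y].
  by rewrite -fmx_tr -trmx_inv; apply: eq_bigr => y _; rewrite mxE mulrC.
by rewrite -(Bw y); apply: eq_bigr => z _; rewrite mulrC.
Qed.

End FinTypeMatrix.

Section DifferentiableBig.
Context {R : realType} {V : normedModType R}.
Implicit Types (x v : V).

Lemma differentiable_sumr (I : Type) (s : seq I) (P : pred I) (f : I -> V -> R) x :
  (forall i, differentiable (f i) x) ->
  differentiable (fun y => \sum_(i <- s | P i) f i y) x.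
Proof.
move=> df; rewrite -fct_sumE.
apply: (big_ind (fun g : V -> R => differentiable g x)) => // g h dg dh.
exact: differentiableD dg dh.
Qed.

Lemma differentiable_prodr (I : Type) (s : seq I) (P : pred I) (f : I -> V -> R) x :
  (forall i, differentiable (f i) x) ->
  differentiable (fun y => \prod_(i <- s | P i) f i y) x.
Proof.
move=> df; rewrite -fct_prodE.
apply: (big_ind (fun g : V -> R => differentiable g x)) => // g h dg dh.
exact: differentiableM dg dh.
Qed.

Lemma derive_sumr (I : Type) (s : seq I) (P : pred I) (f : I -> V -> R) x v :
  (forall i, differentiable (f i) x) ->
  'D_v (fun y => \sum_(i <- s | P i) f i y) x = \sum_(i <- s | P i) 'D_v (f i) x.
Proof.
move=> df; elim: s => [|i s IH].
  by under [fun y => _]funext do rewrite big_nil; rewrite big_nil derive_cst.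
under [fun y => _]funext do rewrite big_cons.
rewrite big_cons; case: (P i) => //; rewrite deriveD ?IH //; apply: diff_derivable => //.
exact: differentiable_sumr.
Qed.

Lemma derive_mulr (f : V -> R) (k : R) x v : differentiable f x ->
  'D_v (fun y => k * f y) x = k * 'D_v f x.
Proof. by move=> df; have := deriveZ k (@diff_derivable _ _ _ f x v df). Qed.

Lemma differentiable_det n (Af : V -> 'M[R]_n) x :
  (forall i j, differentiable (fun y => Af y i j) x) ->
  differentiable (fun y => \det (Af y)) x.
Proof.
move=> dA; apply: differentiable_sumr => s.
apply: differentiableM; first exact: differentiable_cst.
by apply: differentiable_prodr => i; exact: dA.
Qed.

Lemma differentiable_invmx n (Af : V -> 'M[R]_n) x :
  (forall y, Af y \in unitmx) ->
  (forall i j, differentiable (fun y => Af y i j) x) ->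
  forall i j, differentiable (fun y => invmx (Af y) i j) x.
Proof.
move=> A_unit dA i j; under [fun y => _]funext do rewrite /invmx A_unit !mxE.
apply: differentiableM.
  apply: differentiableV; last by rewrite -unitfE -unitmxE.
  exact: differentiable_det.
apply: differentiableM; first exact: differentiable_cst.
by apply: differentiable_det => k l; under [fun y => _]funext do rewrite !mxE; exact: dA.
Qed.

End DifferentiableBig.

Lemma cvgn_series_geometric_bound {R : realType} {u : R ^nat} (c g : R) :
  0 <= g < 1 -> (forall n, `|u n| <= c * g ^+ n) -> cvgn (series u).
Proof.
move=> /andP[g_ge0 g_lt1] u_le; apply: normed_cvg.
apply: (@series_le_cvg _ _ (geometric c g)) => [n|n|n|] //=.
- exact: le_trans (u_le n).
- by apply: is_cvg_geometric_series; rewrite ger0_norm.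
Qed.

Lemma limn_affine_recursion {R : realType} {X : finType} {s : X -> R ^nat}
    {c : X -> R} {W : X -> X -> R} :
  (forall x, cvgn (s x)) ->
  (forall x n, s x n.+1 = c x + \sum_z W x z * s z n) ->
  forall x, limn (s x) = c x + \sum_z W x z * limn (s z).
Proof.
move=> s_cvg s_rec x; apply: cvg_lim => //; rewrite -cvg_shiftS.
under eq_cvg do rewrite /= s_rec.
apply: cvgD; first exact: cvg_cst.
apply: (cvg_big (op := +%R)) => [|z _]; first exact: add_continuous.
exact: cvgMl_tmp.
Qed.

Section DiscountedChain.
Context {R : realType} {X : finType}.
Variables (M : X -> X -> R) (gamma : R).
Hypotheses (M_ge0 : forall x y, 0 <= M x y) (M_row1 : forall x, \sum_y M x y = 1).
Hypotheses (gamma_ge0 : 0 <= gamma) (gamma_lt1 : gamma < 1).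

Definition psi (x y : X) : R := (x == y)%:R - gamma * M x y.

Definition row_step (nu : X -> R) (y : X) : R := \sum_x nu x * M x y.

Definition col_step (v : X -> R) (x : X) : R := \sum_y M x y * v y.

Definition disc_occupancy (nu : X -> R) (x : X) : R :=
  limn (series (fun i => gamma ^+ i * iter i row_step nu x)).

Definition disc_value (v : X -> R) (x : X) : R :=
  limn (series (fun i => gamma ^+ i * iter i col_step v x)).

Lemma sum_psi_mul (v : X -> R) x :
  \sum_y psi x y * v y = v x - gamma * col_step v x.
Proof.
under eq_bigr do rewrite mulrBl; rewrite sumrB; congr (_ - _).
  rewrite (bigD1 x) //= eqxx mul1r big1 ?addr0 // => y /negbTE.
  by rewrite eq_sym => ->; rewrite mul0r.
by rewrite /col_step mulr_sumr; apply: eq_bigr => y _; rewrite mulrA.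
Qed.

Lemma sum_mul_psi (nu : X -> R) y :
  \sum_x nu x * psi x y = nu y - gamma * row_step nu y.
Proof.
under eq_bigr do rewrite mulrBr; rewrite sumrB; congr (_ - _).
  rewrite (bigD1 y) //= eqxx mulr1 big1 ?addr0 // => x /negbTE ->.
  by rewrite mulr0.
by rewrite /row_step mulr_sumr; apply: eq_bigr => x _; rewrite mulrCA.
Qed.

Lemma psi_row_sum x : \sum_y psi x y = 1 - gamma.
Proof.
rewrite sumrB -mulr_sumr M_row1 mulr1; congr (_ - _).
by rewrite (bigD1 x) //= eqxx big1 ?addr0 // => y /negbTE; rewrite eq_sym => ->.
Qed.

Lemma norm_col_step_le (v : X -> R) c x :
  (forall y, `|v y| <= c) -> `|col_step v x| <= c.
Proof.
move=> v_le; apply: le_trans (ler_norm_sum _ _ _) _.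
rewrite -[leRHS]mul1r -(M_row1 x) mulr_suml; apply: ler_sum => y _.
by rewrite normrM ger0_norm // ler_wpM2l.
Qed.

Lemma psi_inj (u : X -> R) :
  (forall x, \sum_y psi x y * u y = 0) -> forall x, u x = 0.
Proof.
move=> psi_u x0.
have [m _ u_max] := @arg_maxP _ _ _ x0 predT (fun x => `|u x|) isT.
have um : `|u m| <= gamma * `|u m|.
  move/eqP: (psi_u m); rewrite sum_psi_mul subr_eq0 => /eqP {1}->.
  by rewrite normrM ger0_norm // ler_wpM2l //; apply: norm_col_step_le => y; exact: u_max.
have : (1 - gamma) * `|u m| <= 0 by rewrite mulrBl mul1r subr_le0.
rewrite pmulr_rle0 ?subr_gt0 // => um_le0.
by apply/eqP; rewrite -normr_le0 (le_trans (u_max x0 isT)).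
Qed.

Section Occupancy.
Variable nu : X -> R.
Hypothesis nu_ge0 : forall x, 0 <= nu x.

Lemma iter_row_step_ge0 i y : 0 <= iter i row_step nu y.
Proof.
elim: i y => [|i IH] y //=.
by apply: sumr_ge0 => x _; rewrite mulr_ge0.
Qed.

Lemma sum_iter_row_step i : \sum_y iter i row_step nu y = \sum_x nu x.
Proof.
elim: i => [|i IH] //=; rewrite /row_step exchange_big /= -IH.
by apply: eq_bigr => x _; rewrite -mulr_sumr M_row1 mulr1.
Qed.

Lemma iter_row_step_le i y : iter i row_step nu y <= \sum_x nu x.
Proof.
rewrite -(sum_iter_row_step i) (bigD1 y) //= lerDl.
by apply: sumr_ge0 => x _; exact: iter_row_step_ge0.
Qed.

Lemma cvgn_disc_occupancy x :
  cvgn (series (fun i => gamma ^+ i * iter i row_step nu x)).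
Proof.
apply: (cvgn_series_geometric_bound (\sum_x nu x) gamma) => [|i].
  by rewrite gamma_ge0.
rewrite normrM !ger0_norm ?exprn_ge0 ?iter_row_step_ge0 // mulrC.
by rewrite ler_wpM2r ?exprn_ge0 ?iter_row_step_le.
Qed.

Lemma series_iter_row_stepS x n :
  series (fun i => gamma ^+ i * iter i row_step nu x) n.+1 =
  nu x + \sum_z gamma * M z x * series (fun i => gamma ^+ i * iter i row_step nu z) n.
Proof.
rewrite /series /= big_nat_recl //= expr0 mul1r; congr (_ + _).
under [RHS]eq_bigr do rewrite mulr_sumr.
rewrite exchange_big /=; apply: eq_bigr => i _.
rewrite /row_step mulr_sumr; apply: eq_bigr => z _; rewrite exprS; ring.
Qed.

Lemma disc_occupancy_psi y : \sum_x disc_occupancy nu x * psi x y = nu y.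
Proof.
rewrite sum_mul_psi {1}/disc_occupancy.
rewrite (limn_affine_recursion cvgn_disc_occupancy series_iter_row_stepS).
rewrite /row_step mulr_sumr.
rewrite [X in _ - X](eq_bigr (fun z => gamma * M z y * disc_occupancy nu z)) ?addrK //.
by move=> z _; ring.
Qed.

Lemma disc_occupancy_ge x : nu x <= disc_occupancy nu x.
Proof.
have -> : nu x = series (fun i => gamma ^+ i * iter i row_step nu x) 1.
  by rewrite /series /= big_nat1 expr0 mul1r.
apply: nondecreasing_cvgn_le; last exact: cvgn_disc_occupancy.
apply: nondecreasing_series => i _ _.
by rewrite mulr_ge0 ?exprn_ge0 ?iter_row_step_ge0.
Qed.

End Occupancy.

Section Value.
Variable v : X -> R.

Lemma norm_iter_col_step_le c i x :
  (forall y, `|v y| <= c) -> `|iter i col_step v x| <= c.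
Proof. by move=> v_le; elim: i x => [|i IH] x //=; apply: norm_col_step_le. Qed.

Lemma cvgn_disc_value x :
  cvgn (series (fun i => gamma ^+ i * iter i col_step v x)).
Proof.
apply: (cvgn_series_geometric_bound (\sum_y `|v y|) gamma) => [|i].
  by rewrite gamma_ge0.
rewrite normrM ger0_norm ?exprn_ge0 // mulrC ler_wpM2r ?exprn_ge0 //.
apply: norm_iter_col_step_le => y.
by rewrite (bigD1 y) //= lerDl; apply: sumr_ge0.
Qed.

Lemma series_iter_col_stepS x n :
  series (fun i => gamma ^+ i * iter i col_step v x) n.+1 =
  v x + \sum_y gamma * M x y * series (fun i => gamma ^+ i * iter i col_step v y) n.
Proof.
rewrite /series /= big_nat_recl //= expr0 mul1r; congr (_ + _).
under [RHS]eq_bigr do rewrite mulr_sumr.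
rewrite exchange_big /=; apply: eq_bigr => i _.
rewrite /col_step mulr_sumr; apply: eq_bigr => y _; rewrite exprS; ring.
Qed.

Lemma disc_value_psi x : \sum_y psi x y * disc_value v y = v x.
Proof.
rewrite sum_psi_mul {1}/disc_value.
rewrite (limn_affine_recursion cvgn_disc_value series_iter_col_stepS).
rewrite /col_step mulr_sumr.
rewrite [X in _ - X](eq_bigr (fun y => gamma * M x y * disc_value v y)) ?addrK //.
by move=> y _; ring.
Qed.

End Value.
End DiscountedChain.

Lemma sum_pairE (R : nmodType) (I J : finType) (F : I * J -> R) :
  \sum_x F x = \sum_i \sum_j F (i, j).
Proof. by rewrite pair_bigA; apply: eq_bigr => -[]. Qed.

Lemma sum_mul_qupd (R : realType) (X : finType) (F q : X -> R) x t :
  \sum_y F y * qupd q x t y = \sum_y F y * q y + F x * t.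
Proof.
rewrite /qupd; under eq_bigr do rewrite mulrDr.
rewrite big_split /=; congr (_ + _).
by rewrite (bigD1 x) //= eqxx big1 ?addr0 // => y /negbTE ->; rewrite mulr0.
Qed.

Lemma dq_quadratic {R : realType} {X : eqType} {f : (X -> R) -> R} {q x} (a b c : R) :
  (forall t, f (qupd q x t) = a + b * t + c * t ^+ 2) -> dq f q x = b.
Proof.
move=> f_upd; rewrite /dq (_ : (fun t => _) = fun t => a + b * t + c * t ^+ 2).
  rewrite derive1E derive_val.
  by rewrite add0r mul1r scale0r addr0 scaler0 addr0 -[RHS]mulr1.
exact/funext.
Qed.

Section MDP.
Variables (R : realType) (S A : finType) (p : nat).
Variables (P : S * A -> S -> R) (mu0 : S -> R) (r : S * A -> R) (gamma : R)
  (pi : 'rV[R]_p -> S -> A -> R).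
Hypotheses (HP0 : forall x s', 0 <= P x s') (HP1 : forall x, \sum_(s' : S) P x s' = 1).
Hypotheses (Hmu0 : forall s, 0 < mu0 s) (Hg0 : 0 <= gamma) (Hg1 : gamma < 1).
Hypotheses (Hpi0 : forall th s a, 0 < pi th s a)
  (Hpi1 : forall th s, \sum_(a : A) pi th s a = 1)
  (Hpid : forall s a th, differentiable (fun th' => pi th' s a) th).

Local Notation X := (S * A)%type.
Local Notation M th := (PPi P pi th).
Local Notation psi th := (psi (PPi P pi th) gamma).
Local Notation dvis := (Defs.dvis P mu0 gamma pi).
Local Notation tdelta := (Defs.tdelta P r gamma pi).
Local Notation Jpi := (Defs.Jpi mu0 gamma pi).
Local Notation Jq := (Defs.Jq P mu0 r gamma pi).
Local Notation hessJq := (Defs.hessJq P mu0 r gamma pi).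
Local Notation mixedJq := (Defs.mixedJq P mu0 r gamma pi).
Local Notation qpol := (Defs.qpol P r gamma pi).
Local Notation Jobj := (Defs.Jobj P mu0 r gamma pi).
Local Notation gS := (Defs.gS P mu0 r gamma pi).

Definition nu0 th (x : X) : R := mu0 x.1 * pi th x.1 x.2.

Lemma PPi_ge0 th x y : 0 <= M th x y.
Proof. by rewrite /PPi mulr_ge0 // ltW. Qed.

Lemma PPi_row1 th x : \sum_y M th x y = 1.
Proof.
rewrite sum_pairE -(HP1 x); apply: eq_bigr => s _.
by rewrite /PPi /= -mulr_sumr Hpi1 mulr1.
Qed.

Lemma nu0_gt0 th x : 0 < nu0 th x.
Proof. exact: mulr_gt0. Qed.

Lemma nu0_ge0 th x : 0 <= nu0 th x.
Proof. exact/ltW/nu0_gt0. Qed.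

Lemma one_sub_gamma_neq0 : 1 - gamma != 0.
Proof. by rewrite subr_eq0 eq_sym lt_eqF. Qed.

Local Hint Resolve PPi_ge0 PPi_row1 nu0_ge0 one_sub_gamma_neq0 : core.

Lemma dvisE th x : dvis th x = (1 - gamma) * disc_occupancy (M th) gamma (nu0 th) x.
Proof. by []. Qed.

Lemma dvis_psi th x : \sum_z dvis th z * psi th z x = (1 - gamma) * nu0 th x.
Proof.
under eq_bigr do rewrite dvisE -mulrA.
by rewrite -mulr_sumr disc_occupancy_psi.
Qed.

Lemma dvis_gt0 th x : 0 < dvis th x.
Proof.
rewrite dvisE mulr_gt0 ?subr_gt0 //.
by apply: lt_le_trans (nu0_gt0 th x) _; apply: disc_occupancy_ge.
Qed.

Lemma qpol_psi th x : \sum_y psi th x y * qpol th y = r x.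
Proof. exact: disc_value_psi. Qed.

Lemma tdeltaE th q x : tdelta th q x = r x - \sum_y psi th x y * q y.
Proof. by rewrite sum_psi_mul. Qed.

Lemma Jpi_nu0 th q : Jpi th q = (1 - gamma) * \sum_x nu0 th x * q x.
Proof.
rewrite /Defs.Jpi /Pi_mul sum_pairE; congr (_ * _); apply: eq_bigr => s _.
by rewrite mulr_sumr; apply: eq_bigr => a _; rewrite mulrA.
Qed.

Lemma Jpi_dvis_psi th q : Jpi th q = \sum_z dvis th z * \sum_y psi th z y * q y.
Proof.
rewrite Jpi_nu0 mulr_sumr; under eq_bigr do rewrite mulrA -dvis_psi mulr_suml.
rewrite exchange_big /=; apply: eq_bigr => z _.
by rewrite mulr_sumr; apply: eq_bigr => y _; rewrite mulrA.
Qed.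

Lemma Jpi_add_dvis_tdelta th q :
  Jpi th q + \sum_x dvis th x * tdelta th q x = Jobj th.
Proof.
rewrite /Defs.Jobj !Jpi_dvis_psi -big_split /=; apply: eq_bigr => z _.
by rewrite tdeltaE qpol_psi; ring.
Qed.

Lemma dq_Jpi th q y : dq (Jpi th) q y = (1 - gamma) * nu0 th y.
Proof.
apply: (dq_quadratic (Jpi th q) _ 0) => t.
by rewrite !Jpi_nu0 sum_mul_qupd mulrDr mulrA mul0r addr0.
Qed.

Lemma tdelta_qupd th q x t z :
  tdelta th (qupd q x t) z = tdelta th q z - psi th z x * t.
Proof. by rewrite !tdeltaE sum_mul_qupd opprD addrA. Qed.

Lemma dq_Jq th q x :
  dq (Jq th) q x = - \sum_y dvis th y * tdelta th q y * psi th y x.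
Proof.
apply: (dq_quadratic (Jq th q) _
          (2^-1 * \sum_y dvis th y * psi th y x ^+ 2)) => t.
rewrite /Defs.Jq; under eq_bigr do rewrite tdelta_qupd.
rewrite -sumrN !mulr_sumr !mulr_suml -!big_split /=; apply: eq_bigr => y _.
by field.
Qed.

Definition hess th (x y : X) : R := \sum_z dvis th z * psi th z x * psi th z y.

Lemma hessJqE th q x y : hessJq th q x y = hess th x y.
Proof.
apply: (dq_quadratic (dq (Jq th) q x) _ 0) => t.
rewrite !dq_Jq; under eq_bigr do rewrite tdelta_qupd.
rewrite /hess mulr_suml -!sumrN -big_split mul0r addr0 /=.
by apply: eq_bigr => z _; ring.
Qed.

Lemma hess_quad_form th (u : X -> R) :
  \sum_x u x * \sum_y hess th x y * u y =
  \sum_z dvis th z * (\sum_x psi th z x * u x) ^+ 2.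
Proof.
transitivity (\sum_x \sum_y \sum_z
                dvis th z * (psi th z x * u x) * (psi th z y * u y)).
  apply: eq_bigr => x _; rewrite mulr_sumr; apply: eq_bigr => y _.
  by rewrite /hess mulr_suml mulr_sumr; apply: eq_bigr => z _; ring.
under eq_bigr do rewrite exchange_big /=; rewrite exchange_big /=.
apply: eq_bigr => z _; rewrite expr2 big_distrlr /= mulr_sumr.
by apply: eq_bigr => x _; rewrite mulr_sumr; apply: eq_bigr => y _; rewrite -mulrA.
Qed.

Lemma hess_unit th : fmx (hess th) \in unitmx.
Proof.
apply: fmx_unit => u hess_u.
have quad0 : \sum_z dvis th z * (\sum_x psi th z x * u x) ^+ 2 = 0.
  by rewrite -hess_quad_form big1 // => x _; rewrite hess_u mulr0.
have quad_ge0 z : true -> 0 <= dvis th z * (\sum_x psi th z x * u x) ^+ 2.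
  by rewrite mulr_ge0 ?sqr_ge0 // ltW // dvis_gt0.
apply: (psi_inj (M th) gamma) => // z.
move/eqP: (@psumr_eq0P _ _ _ _ quad_ge0 quad0 z isT).
by rewrite mulf_eq0 sqrf_eq0 gt_eqF ?dvis_gt0 // => /eqP.
Qed.

Lemma hess_mul_const th x :
  \sum_y hess th x y * (1 - gamma)^-1 = (1 - gamma) * nu0 th x.
Proof.
rewrite -dvis_psi /hess; under eq_bigr do rewrite mulr_suml.
rewrite exchange_big /=; apply: eq_bigr => z _.
by rewrite -mulr_suml -mulr_sumr psi_row_sum // mulfK.
Qed.

Lemma finv_hessJq_dq_Jpi th q x :
  \sum_y Defs.finv (hessJq th q) x y * dq (Jpi th) q y = (1 - gamma)^-1.
Proof.
have -> : hessJq th q = hess th.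
  by apply/funext => x'; apply/funext => y; exact: hessJqE.
under eq_bigr do rewrite dq_Jpi.
exact: (fmx_col_solve (fun=> (1 - gamma)^-1) (hess_unit th) (hess_mul_const th)).
Qed.

Lemma nu0_differentiable x th : differentiable (fun th' => nu0 th' x) th.
Proof. by apply: differentiableM; [exact: differentiable_cst | exact: Hpid]. Qed.

Lemma psi_differentiable x y th : differentiable (fun th' => psi th' x y) th.
Proof.
apply: differentiableB; first exact: differentiable_cst.
apply: differentiableM; first exact: differentiable_cst.
by apply: differentiableM; [exact: differentiable_cst | exact: Hpid].
Qed.

Lemma fmx_psi_unit th : fmx (psi th) \in unitmx.
Proof. exact/fmx_unit/(psi_inj (M th) gamma). Qed.

Lemma dvis_differentiable x th : differentiable (fun th' => dvis th' x) th.
Proof.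
under [fun th' => _]funext => th' do
  rewrite (fmx_row_solve (fmx_psi_unit th') (dvis_psi th')).
apply: differentiable_sumr => z; apply: differentiableM.
  by apply: differentiableM; [exact: differentiable_cst | exact: nu0_differentiable].
apply: differentiable_invmx => [th'|i j]; first exact: fmx_psi_unit.
by under [fun th' => _]funext do rewrite mxE; exact: psi_differentiable.
Qed.

Lemma tdelta_differentiable q x th : differentiable (fun th' => tdelta th' q x) th.
Proof.
under [fun th' => _]funext do rewrite tdeltaE.
apply: differentiableB; first exact: differentiable_cst.
apply: differentiable_sumr => y.
by apply: differentiableM; [exact: psi_differentiable | exact: differentiable_cst].
Qed.

Lemma dvis_tdelta_differentiable q th :
  differentiable (fun th' => \sum_x dvis th' x * tdelta th' q x) th.
Proof.
apply: differentiable_sumr => x.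
by apply: differentiableM; [exact: dvis_differentiable | exact: tdelta_differentiable].
Qed.

Lemma Jpi_differentiable q th : differentiable (fun th' => Jpi th' q) th.
Proof.
under [fun th' => _]funext do rewrite Jpi_nu0.
apply: differentiableM; first exact: differentiable_cst.
apply: differentiable_sumr => x.
by apply: differentiableM; [exact: nu0_differentiable | exact: differentiable_cst].
Qed.

Lemma sum_mixedJq th q i :
  \sum_x mixedJq th q x i =
  - (1 - gamma) * dth (fun th' => \sum_x dvis th' x * tdelta th' q x) th i.
Proof.
have sum_dq_Jq th' : \sum_x dq (Jq th') q x =
    - (1 - gamma) * \sum_y dvis th' y * tdelta th' q y.
  under eq_bigr do rewrite dq_Jq; rewrite sumrN exchange_big mulNr mulr_sumr /=.
  congr (- _); apply: eq_bigr => y _.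
  by rewrite -mulr_sumr psi_row_sum // mulrC.
rewrite /Defs.mixedJq /dth -derive_sumr => [|x]; last first.
  under [fun th' => _]funext do rewrite dq_Jq.
  apply: differentiableN; apply: differentiable_sumr => y.
  apply: differentiableM; last exact: psi_differentiable.
  by apply: differentiableM; [exact: dvis_differentiable | exact: tdelta_differentiable].
under [fun th' => _]funext do rewrite sum_dq_Jq.
by rewrite derive_mulr //; exact: dvis_tdelta_differentiable.
Qed.

Lemma gSE th q i :
  gS th q i =
  dth (fun th' => Jpi th' q) th i
  + dth (fun th' => \sum_x dvis th' x * tdelta th' q x) th i.
Proof.
rewrite /Defs.gS (eq_bigr (fun x => mixedJq th q x i * (1 - gamma)^-1)).
  by rewrite -mulr_suml sum_mixedJq mulrAC mulNr mulfV // mulN1r opprK.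
move=> x _; rewrite -(finv_hessJq_dq_Jpi th q x) mulr_sumr.
by apply: eq_bigr => y _; rewrite mulrA.
Qed.

Lemma dth_Jpi_add_dvis_tdelta th q i :
  dth (fun th' => Jpi th' q) th i
  + dth (fun th' => \sum_x dvis th' x * tdelta th' q x) th i =
  dth Jobj th i.
Proof.
rewrite /dth -deriveD; last 2 first.
- exact/diff_derivable/Jpi_differentiable.
- exact/diff_derivable/dvis_tdelta_differentiable.
by congr derive; apply/funext => th'; exact: Jpi_add_dvis_tdelta.
Qed.

End MDP.

Theorem theorem3 (R : realType) (S A : finType) (p : nat)
  (P : S * A -> S -> R) (mu0 : S -> R) (r : S * A -> R) (gamma : R)
  (pi : 'rV[R]_p -> S -> A -> R)
  (HP0 : forall x s', 0 <= P x s')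
  (HP1 : forall x, \sum_(s' : S) P x s' = 1)
  (Hmu0 : forall s, 0 < mu0 s)
  (Hmu1 : \sum_(s : S) mu0 s = 1)
  (Hg0 : 0 <= gamma) (Hg1 : gamma < 1)
  (Hpi0 : forall th s a, 0 < pi th s a)
  (Hpi1 : forall th s, \sum_(a : A) pi th s a = 1)
  (Hpid : forall s a th, differentiable (fun th' => pi th' s a) th) :
  forall (th : 'rV[R]_p) (q : S * A -> R) (i : 'I_p),
    gS P mu0 r gamma pi th q i
      = dth (fun th' => Jpi mu0 gamma pi th' q) th i
        + dth (fun th' => \sum_(x : S * A)
                   dvis P mu0 gamma pi th' x * tdelta P r gamma pi th' q x) th i
    /\ dth (fun th' => Jpi mu0 gamma pi th' q) th i
        + dth (fun th' => \sum_(x : S * A)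
                   dvis P mu0 gamma pi th' x * tdelta P r gamma pi th' q x) th i
       = dth (Jobj P mu0 r gamma pi) th i.
Proof.
by move=> th q i; split; [apply: gSE | apply: dth_Jpi_add_dvis_tdelta].
Qed.
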